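(* Let $D\subseteq\mathcal A_-([0,1])$ be such that for all $0\le a<b\le1$ we have $[a,b]\in D$ and $\mathsf C_{[0,1]}|_D\le_W\mathsf C_{[a,b]}|_D$. Then $\mathsf C_{[0,1]}|_D$ is co-complete and co-total.
   Context: A problem $f:\subseteq X\rightrightarrows Y$ between represented spaces (sets with surjective partial $\delta:\subseteq\mathbb{N}^\mathbb{N}\to X$) is a partial multi-valued map; $F\vdash f$ means $\delta_YF(p)\in f(\delta_X(p))$ whenever $\delta_X(p)\in\mathrm{dom}(f)$; $f\le_W g$ iff there are computable partial $H,K$ with $H\langle\mathrm{id},GK\rangle\vdash f$ for all $G\vdash g$. $\mathcal A_-([0,1])$ is the space of closed subsets of $[0,1]$ represented by $p\mapsto[0,1]\setminus\bigcup_nB_{p(n)}$ for a standard enumeration $(B_n)$ of rational open balls; $\mathsf C_{[a,b]}$ is choice on $[a,b]$: $A\mapsto A$ for nonempty closed $A\subseteq[a,b]$. $\mathsf C_{[0,1]}|_D$ is the restriction of $\mathsf C_{[0,1]}$ to the nonempty sets in $D$, and $\mathsf C_{[a,b]}|_D$ the restriction of $\mathsf C_{[a,b]}$ to the nonempty sets in $D$ that are contained in $[a,b]$. For $p\in\mathbb{N}^\mathbb{N}$, $p-1$ is the concatenation of $p(0)-1,p(1)-1,\dots$ with $0-1$ the empty word; the completion of $(X,\delta_X)$ is $\overline X=X\cup\{\bot\}$ with $\delta_{\overline X}(p)=\delta_X(p-1)$ if $p-1$ is an infinite sequence in $\mathrm{dom}(\delta_X)$, $\bot$ otherwise. For $g:\subseteq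 U\rightrightarrows V$: $\overline g:\overline U\rightrightarrows\overline V$ equals $g$ on $\mathrm{dom}(g)$ and $\overline V$ elsewhere; $\mathsf Tg:U\rightrightarrows V$ equals $g$ on $\mathrm{dom}(g)$ and $V$ elsewhere. A problem $h$ is co-complete if $h\le_W\overline g\iff h\le_Wg$ for all problems $g$, and co-total if $h\le_W\mathsf Tg\iff h\le_Wg$ for all problems $g$. *)

From Stdlib Require Import Reals QArith List Arith Cantor.
Open Scope R_scope.

Definition baire := nat -> nat.

(** * Type-2 computability: mu-recursive functions with an oracle.
    A term [t] computes the partial function on Baire space
    p |-> (n |-> value of t on input [n] with oracle p). *)
Inductive prf : Type :=
| pZero : prf
| pSucc : prf
| pProj : nat -> prf
| pOracle : prf
| pComp : prf -> list prf -> prf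
| pRec : prf -> prf -> prf
| pMin : prf -> prf.

Inductive eval (p : baire) : prf -> list nat -> nat -> Prop :=
| eZero xs : eval p pZero xs 0
| eSucc xs : eval p pSucc xs (S (hd 0%nat xs))
| eProj i xs : eval p (pProj i) xs (nth i xs 0%nat)
| eOracle xs : eval p pOracle xs (p (hd 0%nat xs))
| eComp f gs xs ys v :
    evals p gs xs ys -> eval p f ys v -> eval p (pComp f gs) xs v
| eRec0 f g xs v : eval p f xs v -> eval p (pRec f g) (0%nat :: xs) v
| eRecS f g n xs w v :
    eval p (pRec f g) (n :: xs) w -> eval p g (n :: w :: xs) v ->
    eval p (pRec f g) (S n :: xs) v
| eMin f xs n :
    eval p f (n :: xs) 0%nat ->
    (forall m, (m < n)%nat -> exists k, eval p f (m :: xs) (S k)) ->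
    eval p (pMin f) xs n
with evals (p : baire) : list prf -> list nat -> list nat -> Prop :=
| esNil xs : evals p nil xs nil
| esCons g gs xs v vs :
    eval p g xs v -> evals p gs xs vs -> evals p (g :: gs) xs (v :: vs).

Definition comp_app (t : prf) (p q : baire) : Prop :=
  forall n, eval p t (n :: nil) (q n).

Definition bpair (p q : baire) : baire :=
  fun n => if Nat.even n then p (Nat.div2 n) else q (Nat.div2 n).

(** * Represented spaces: a carrier with a partial (relational) naming map. *)
Record rep_space : Type := RepSpace {
  carrier :> Type;
  delta : baire -> carrier -> Prop
}.

Definition is_rep (X : rep_space) : Prop :=
  (forall p x y, delta X p x -> delta X p y -> x = y) /\
  (forall x : carrier X, exists p, delta X p x).

(** * Problems: partial multi-valued maps X ⇉ Y, as relations;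
    dom f = { x | f x is nonempty }. *)
Definition problem (X Y : rep_space) := carrier X -> carrier Y -> Prop.

Definition pdom {X Y : rep_space} (f : problem X Y) (x : carrier X) : Prop :=
  exists y, f x y.

(** Realizers: arbitrary partial functions on Baire space. *)
Definition realizes {X Y : rep_space} (F : baire -> option baire)
  (f : problem X Y) : Prop :=
  forall p x, delta X p x -> pdom f x ->
    exists q, F p = Some q /\ exists y, delta Y q y /\ f x y.

(** Weihrauch reducibility: computable H, K with H<id, G K> |- f for all G |- g. *)
Definition leW {X Y U V : rep_space} (f : problem X Y) (g : problem U V) : Prop :=
  exists tH tK : prf,
    forall G : baire -> option baire, realizes G g ->
      forall p x, delta X p x -> pdom f x ->
        exists r, comp_app tK p r /\
        exists s, G r = Some s /\
        exists u, comp_app tH (bpair p s) u /\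
        exists y, delta Y u y /\ f x y.

(** [minus1 p q] : p-1 is the infinite sequence q, i.e. k enumerates
    (in increasing order) exactly the positions of nonzero entries of p
    and q n = p (k n) - 1. *)
Definition minus1 (p q : baire) : Prop :=
  exists k : nat -> nat,
    (forall n, (k n < k (S n))%nat) /\
    (forall n, p (k n) <> 0%nat /\ q n = (p (k n) - 1)%nat) /\
    (forall m, p m <> 0%nat -> exists n, k n = m).

Definition completion (X : rep_space) : rep_space :=
  {| carrier := option (carrier X);
     delta := fun p ox =>
       match ox with
       | Some x => exists q, minus1 p q /\ delta X q x
       | None => ~ (exists q x, minus1 p q /\ delta X q x)
       end |}.

Definition pcompletion {U V : rep_space} (g : problem U V)
  : problem (completion U) (completion V) :=
  fun ou ov =>
    match ou with
    | Some u => pdom g u -> exists v, ov = Some v /\ g u v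
    | None => True
    end.

Definition ptotal {U V : rep_space} (g : problem U V) : problem U V :=
  fun u v => pdom g u -> g u v.

Definition cocomplete {X Y : rep_space} (h : problem X Y) : Prop :=
  forall (U V : rep_space), is_rep U -> is_rep V ->
    forall g : problem U V, leW h (pcompletion g) <-> leW h g.

Definition cototal {X Y : rep_space} (h : problem X Y) : Prop :=
  forall (U V : rep_space), is_rep U -> is_rep V ->
    forall g : problem U V, leW h (ptotal g) <-> leW h g.

Definition qenum (n : nat) : Q :=
  let (a, r) := Cantor.of_nat n in
  let (b, c) := Cantor.of_nat r in
  ((Z.of_nat a - Z.of_nat b)%Z # Pos.of_succ_nat c)%Q.

Definition ball (n : nat) (x : R) : Prop :=
  let (i, j) := Cantor.of_nat n in
  Rabs (x - Q2R (qenum i)) < Q2R (qenum j).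

Definition closed_of (p : baire) (x : R) : Prop :=
  0 <= x <= 1 /\ forall n, ~ ball (p n) x.

Definition closed01_set : Type := { A : R -> Prop | exists p, A = closed_of p }.

Definition Closed01 : rep_space :=
  {| carrier := closed01_set;
     delta := fun p A => proj1_sig A = closed_of p |}.

Definition cauchy (p : baire) (x : R) : Prop :=
  forall n, Rabs (Q2R (qenum (p n)) - x) <= / 2 ^ n.

Definition Interval (a b : R) : rep_space :=
  {| carrier := { x : R | a <= x <= b };
     delta := fun p x => cauchy p (proj1_sig x) |}.

Definition C01_D (D : closed01_set -> Prop) : problem Closed01 (Interval 0 1) :=
  fun A x => D A /\ proj1_sig A (proj1_sig x).

Definition Cab_D (a b : R) (D : closed01_set -> Prop)
  : problem Closed01 (Interval a b) :=
  fun A x => D A /\ (forall y, proj1_sig A y -> a <= y <= b) /\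
             proj1_sig A (proj1_sig x).

(* Let g' be the completion or the totalization of g; on "degenerate" inputs every answer of
   g' is correct.  Given C_[0,1]|_D <=W g', run the reduction on the all-zero name of [0,1]
   against a realizer of g' that returns a fixed name s0 on degenerate inputs.  By continuity
   the first N digits of the input together with s0 fix the output digit of index 3, which
   confines the output to the ball of radius 1/8 around some rational c.  Take [a,b] farther
   than 1/8 from c.
   Padding a name of A with N zeros does not change A, so for A included in [a,b] the
   reduction cannot query g' on a degenerate input (it would then output a point near c,
   outside A), and on genuine inputs the answers of g' are computed from those of g.  Thus
   C_[0,1]|_D <=W C_[a,b]|_D <=W g.  The converse directions follow from g <=W g'. *)

From Stdlib Require Import Reals QArith List Arith Cantor Lia Lra.
From Stdlib Require Import FunctionalExtensionality PropExtensionality ClassicalEpsilon Classical.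
Open Scope R_scope.
Import ListNotations.

Section PrfNestedInd.
Variable P : prf -> Prop.
Hypotheses (HZero : P pZero) (HSucc : P pSucc) (HProj : forall i, P (pProj i))
  (HOracle : P pOracle) (HComp : forall f gs, P f -> Forall P gs -> P (pComp f gs))
  (HRec : forall f g, P f -> P g -> P (pRec f g)) (HMin : forall f, P f -> P (pMin f)).

Fixpoint prf_nested_ind (t : prf) : P t :=
  match t with
  | pZero => HZero
  | pSucc => HSucc
  | pProj i => HProj i
  | pOracle => HOracle
  | pComp f gs => HComp f gs (prf_nested_ind f)
      ((fix all gs : Forall P gs :=
          match gs with
          | [] => Forall_nil P
          | g :: gs => Forall_cons g (prf_nested_ind g) (all gs)
          end) gs)
  | pRec f g => HRec f g (prf_nested_ind f) (prf_nested_ind g)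
  | pMin f => HMin f (prf_nested_ind f)
  end.

End PrfNestedInd.

Local Open Scope nat_scope.

Lemma eval_det p t : forall xs v v', eval p t xs v -> eval p t xs v' -> v = v'.
Proof.
  induction t as [| | | |f gs IHf IHgs|f g IHf IHg|f IHf] using prf_nested_ind;
    intros xs v v' H1 H2.
  1-4: inversion H1; inversion H2; subst; auto.
  - assert (Hgs : forall ys ys', evals p gs xs ys -> evals p gs xs ys' -> ys = ys').
    { clear H1 H2. induction IHgs as [|g gs IHg _ IH]; intros ys ys' E1 E2;
        inversion E1; inversion E2; subst; f_equal; eauto. }
    inversion H1; inversion H2; subst.
    match goal with Ha : evals _ _ _ ?a, Hb : evals _ _ _ ?b |- _ =>
      assert (a = b) by (apply Hgs; assumption); subst end.
    eauto.
  - destruct xs as [|n xs]; [inversion H1|].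
    revert v v' H1 H2. induction n as [|n IHn]; intros v v' H1 H2;
      inversion H1; inversion H2; subst; eauto.
    match goal with Ha : eval _ (pRec _ _) _ ?a, Hb : eval _ (pRec _ _) _ ?b |- _ =>
      assert (a = b) by eauto; subst end.
    eauto.
  - inversion H1 as [| | | | | | |? ? ? Hv Hltv];
      inversion H2 as [| | | | | | |? ? ? Hv' Hltv']; subst.
    destruct (Nat.lt_trichotomy v v') as [Hl|[->|Hl]]; [| reflexivity |].
    + destruct (Hltv' v Hl) as [k Hk]. discriminate (IHf _ _ _ Hv Hk).
    + destruct (Hltv v' Hl) as [k Hk]. discriminate (IHf _ _ _ Hv' Hk).
Qed.

Lemma comp_app_fun t p w1 w2 : comp_app t p w1 -> comp_app t p w2 -> w1 = w2.
Proof. intros H1 H2. extensionality n. eapply eval_det; eauto. Qed.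

Definition agree (N : nat) (p o : baire) := forall i, i < N -> o i = p i.

Lemma agree_le N M p o : N <= M -> agree M p o -> agree N p o.
Proof. intros H A i Hi; apply A; lia. Qed.

Lemma agree_conj p (Q1 Q2 : baire -> Prop) :
  (exists N, forall o, agree N p o -> Q1 o) -> (exists N, forall o, agree N p o -> Q2 o) ->
  exists N, forall o, agree N p o -> Q1 o /\ Q2 o.
Proof.
  intros [N1 H1] [N2 H2]. exists (Nat.max N1 N2); intros o A.
  split; [apply H1|apply H2]; (eapply agree_le; [|exact A]; lia).
Qed.

Lemma agree_forall_lt p (Q : nat -> baire -> Prop) n :
  (forall m, m < n -> exists N, forall o, agree N p o -> Q m o) ->
  exists N, forall o, agree N p o -> forall m, m < n -> Q m o.
Proof.
  induction n as [|n IHn]; intros H; [exists 0; intros; lia|].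
  destruct (agree_conj p _ _ (IHn (fun m Hm => H m ltac:(lia))) (H n ltac:(lia)))
    as [N HN].
  exists N; intros o A m Hm. destruct (HN o A) as [Hlt Hn].
  destruct (Nat.eq_dec m n) as [->|]; [exact Hn|apply Hlt; lia].
Qed.

Lemma eval_continuous p t : forall xs v, eval p t xs v ->
  exists N, forall o, agree N p o -> eval o t xs v.
Proof.
  induction t as [| | | |f gs IHf IHgs|f g IHf IHg|f IHf] using prf_nested_ind;
    intros xs v H.
  - inversion H; exists 0; intros; constructor.
  - inversion H; exists 0; intros; constructor.
  - inversion H; exists 0; intros; constructor.
  - inversion H; subst.
    exists (S (hd 0 xs)); intros o A. rewrite <- (A (hd 0 xs)) by lia. constructor.
  - assert (Hgs : forall zs, evals p gs xs zs ->
                    exists N, forall o, agree N p o -> evals o gs xs zs).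
    { clear - IHgs. induction IHgs as [|g gs IHg _ IH]; intros zs E; inversion E; subst.
      - exists 0; intros; constructor.
      - destruct (agree_conj p _ _ (IHg _ _ ltac:(eassumption)) (IH _ ltac:(eassumption)))
          as [N HN].
        exists N; intros o A; destruct (HN o A); constructor; auto. }
    inversion H; subst.
    match goal with Ha : evals _ _ _ _, Hb : eval _ f _ _ |- _ =>
      destruct (agree_conj p _ _ (Hgs _ Ha) (IHf _ _ Hb)) as [N HN] end.
    exists N; intros o A; destruct (HN o A); econstructor; eauto.
  - destruct xs as [|n xs]; [inversion H|].
    revert v H. induction n as [|n IHn]; intros v H; inversion H; subst.
    + match goal with Hb : eval _ f _ _ |- _ => destruct (IHf _ _ Hb) as [N HN] end.
      exists N; intros o A; constructor; auto.
    + match goal with Ha : eval _ (pRec _ _) _ _, Hb : eval _ g _ _ |- _ =>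
        destruct (agree_conj p _ _ (IHn _ Ha) (IHg _ _ Hb)) as [N HN] end.
      exists N; intros o A; destruct (HN o A); econstructor; eauto.
  - inversion H as [| | | | | | |? ? ? Hv Hltv]; subst.
    assert (Hlt : exists N, forall o, agree N p o ->
                    forall m, m < v -> exists k, eval o f (m :: xs) (S k)).
    { apply agree_forall_lt. intros m Hm. destruct (Hltv m Hm) as [k Hk].
      destruct (IHf _ _ Hk) as [N HN]. exists N; eauto. }
    destruct (agree_conj p _ _ (IHf _ _ Hv) Hlt) as [N HN].
    exists N; intros o A; destruct (HN o A); constructor; auto.
Qed.

Fixpoint psubst (s t : prf) : prf :=
  match t with
  | pOracle => pComp s [pProj 0]
  | pComp f gs => pComp (psubst s f) (map (psubst s) gs)
  | pRec f g => pRec (psubst s f) (psubst s g)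
  | pMin f => pMin (psubst s f)
  | t => t
  end.

Lemma eval_psubst p q s : comp_app s p q ->
  forall t xs v, eval q t xs v -> eval p (psubst s t) xs v.
Proof.
  intros Hs t.
  induction t as [| | | |f gs IHf IHgs|f g IHf IHg|f IHf] using prf_nested_ind;
    intros xs v H; simpl.
  - inversion H; constructor.
  - inversion H; constructor.
  - inversion H; constructor.
  - inversion H; subst. econstructor; [repeat constructor|].
    replace (nth 0 xs 0) with (hd 0 xs) by (destruct xs; auto). apply Hs.
  - assert (Hgs : forall zs, evals q gs xs zs -> evals p (map (psubst s) gs) xs zs).
    { clear - IHgs. induction IHgs as [|g gs IHg _ IH]; intros zs E; inversion E; subst;
        constructor; auto. }
    inversion H; subst. econstructor; eauto.
  - destruct xs as [|n xs]; [inversion H|].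
    revert v H. induction n as [|n IHn]; intros v H; inversion H; subst.
    + constructor; auto.
    + econstructor; eauto.
  - inversion H as [| | | | | | |? ? ? Hv Hltv]; subst.
    constructor; auto. intros m Hm. destruct (Hltv m Hm) as [k Hk]. eauto.
Qed.

Lemma comp_app_psubst s t p q w :
  comp_app s p q -> comp_app t q w -> comp_app (psubst s t) p w.
Proof. intros Hs Ht n. exact (eval_psubst p q s Hs t _ _ (Ht n)). Qed.

Definition pred_prog := pRec pZero (pProj 0).
Lemma eval_pred_prog p n xs : eval p pred_prog (n :: xs) (Nat.pred n).
Proof.
  induction n; [apply eRec0, eZero|].
  eapply eRecS; [eauto|]. apply (eProj p 0 (n :: _ :: xs)).
Qed.

Definition double_prog := pRec pZero (pComp pSucc [pComp pSucc [pProj 1]]).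
Lemma eval_double_prog p n xs : eval p double_prog (n :: xs) (2 * n).
Proof.
  induction n; [repeat constructor|].
  replace (2 * S n) with (S (S (2 * n))) by lia.
  econstructor; [eauto|]. repeat econstructor.
Qed.

Definition iszero_prog := pRec (pComp pSucc [pZero]) pZero.
Lemma eval_iszero_prog p n xs : eval p iszero_prog (n :: xs) (if n =? 0 then 1 else 0).
Proof.
  induction n; [apply eRec0; repeat econstructor|].
  eapply eRecS; [exact IHn|apply eZero].
Qed.

Definition cond_prog c y x := pComp (pRec (pProj 0) (pProj 3)) [c; y; x].
Lemma eval_cond_prog p c y x xs vc vy vx :
  eval p c xs vc -> eval p y xs vy -> eval p x xs vx ->
  eval p (cond_prog c y x) xs (match vc with 0 => vy | _ => vx end).
Proof.
  intros Hc Hy Hx. econstructor; [repeat constructor; eauto|].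
  destruct vc; [apply eRec0, (eProj p 0 [vy; vx])|].
  assert (exists w, eval p (pRec (pProj 0) (pProj 3)) [vc; vy; vx] w) as [w Hw].
  { clear. induction vc as [|vc [w Hw]]; eexists; [apply eRec0, eProj|].
    eapply eRecS; [exact Hw|apply eProj]. }
  eapply eRecS; [exact Hw|apply (eProj p 3 [vc; w; vy; vx])].
Qed.

Definition sub_prog := pRec (pProj 0) (pComp pred_prog [pProj 1]).
Lemma eval_sub_prog p b a xs : eval p sub_prog (b :: a :: xs) (a - b).
Proof.
  induction b.
  - constructor. rewrite Nat.sub_0_r. apply (eProj p 0 (a :: xs)).
  - econstructor; [eauto|]. econstructor; [repeat constructor|].
    replace (a - S b) with (Nat.pred (a - b)) by lia. apply eval_pred_prog.
Qed.

Definition parity_prog := pRec pZero (pComp iszero_prog [pProj 1]).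
Lemma eval_parity_prog p n xs : eval p parity_prog (n :: xs) (if Nat.even n then 0 else 1).
Proof.
  induction n; [repeat constructor|].
  econstructor; [eauto|]. econstructor; [repeat constructor|].
  rewrite Nat.even_succ, <- Nat.negb_even. simpl nth.
  destruct (Nat.even n); apply eval_iszero_prog.
Qed.

Definition div2_prog :=
  pRec pZero (cond_prog (pComp parity_prog [pProj 0]) (pProj 1) (pComp pSucc [pProj 1])).
Lemma eval_div2_prog p n xs : eval p div2_prog (n :: xs) (Nat.div2 n).
Proof.
  induction n; [repeat constructor|].
  econstructor; [eauto|].
  replace (Nat.div2 (S n))
    with (match (if Nat.even n then 0 else 1) with 0 => Nat.div2 n | _ => S (Nat.div2 n) end).
  - apply eval_cond_prog; repeat econstructor. apply eval_parity_prog.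
  - destruct (Nat.Even_or_Odd n) as [[m ->]|[m ->]].
    + rewrite Nat.even_mul, Nat.div2_succ_double, Nat.div2_double. reflexivity.
    + replace (S (2 * m + 1)) with (2 * S m) by lia.
      rewrite Nat.add_1_r, Nat.even_succ, Nat.odd_mul, Nat.div2_succ_double, Nat.div2_double.
      reflexivity.
Qed.

Definition bpair_prog t1 t2 :=
  cond_prog parity_prog (pComp t1 [div2_prog]) (pComp t2 [div2_prog]).
Lemma comp_app_bpair_prog p t1 t2 a b :
  comp_app t1 p a -> comp_app t2 p b -> comp_app (bpair_prog t1 t2) p (bpair a b).
Proof.
  intros H1 H2 n. unfold bpair.
  replace (if Nat.even n then a (Nat.div2 n) else b (Nat.div2 n)) with
    (match (if Nat.even n then 0 else 1) with 0 => a (Nat.div2 n) | _ => b (Nat.div2 n) end)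
    by (destruct (Nat.even n); auto).
  apply eval_cond_prog; [apply eval_parity_prog| |];
    (econstructor; [constructor; [apply eval_div2_prog|constructor]|]); auto.
Qed.

Definition id_prog := pOracle.
Lemma comp_app_id_prog p : comp_app id_prog p p.
Proof. intros n. apply (eOracle p [n]). Qed.

Definition bfst_prog := pComp pOracle [double_prog].
Lemma comp_app_bfst_prog a b : comp_app bfst_prog (bpair a b) a.
Proof.
  intros n. econstructor; [constructor; [apply eval_double_prog|constructor]|].
  replace (a n) with (bpair a b (2 * n))
    by (unfold bpair; rewrite Nat.even_mul, Nat.div2_double; auto).
  apply (eOracle (bpair a b) [2 * n]).
Qed.

Definition bsnd_prog := pComp pOracle [pComp pSucc [double_prog]].
Lemma comp_app_bsnd_prog a b : comp_app bsnd_prog (bpair a b) b.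
Proof.
  intros n. econstructor; [repeat econstructor; apply eval_double_prog|].
  replace (b n) with (bpair a b (S (2 * n)))
    by (unfold bpair; rewrite Nat.even_succ, Nat.odd_mul, Nat.div2_succ_double; auto).
  apply (eOracle (bpair a b) [S (2 * n)]).
Qed.

Definition plus1 (p : baire) : baire := fun n => S (p n).

Definition plus1_prog := pComp pSucc [pOracle].
Lemma comp_app_plus1_prog p : comp_app plus1_prog p (plus1 p).
Proof. intros n. repeat econstructor. Qed.

Definition pad1 (p : baire) : baire := fun n => match n with 0 => 0 | S m => p m end.
Definition pad (N : nat) : baire -> baire := Nat.iter N pad1.

Definition pad1_prog := pRec pZero pOracle.
Lemma comp_app_pad1_prog p : comp_app pad1_prog p (pad1 p).
Proof.
  intros [|n]; [repeat constructor|].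
  assert (exists w, eval p pad1_prog [n] w) as [w Hw].
  { induction n as [|n [w Hw]]; eexists; [apply eRec0, eZero|].
    eapply eRecS; [exact Hw|apply (eOracle p [n; w])]. }
  eapply eRecS; [exact Hw|apply (eOracle p [n; w])].
Qed.

Definition pad_prog (N : nat) : prf := Nat.iter N (fun t => psubst t pad1_prog) id_prog.
Lemma comp_app_pad_prog N p : comp_app (pad_prog N) p (pad N p).
Proof.
  induction N; [apply comp_app_id_prog|].
  eapply comp_app_psubst; [exact IHN|apply comp_app_pad1_prog].
Qed.

Lemma pad_lt N p i : i < N -> pad N p i = 0.
Proof. revert i; induction N; intros [|i] Hi; simpl; auto; try lia. apply IHN; lia. Qed.

Lemma pad_add N p j : pad N p (N + j) = p j.
Proof. induction N; simpl; auto. Qed.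

Lemma pad_cases N p i : (exists j, pad N p i = p j) \/ pad N p i = 0.
Proof. revert i; induction N; intros [|i]; simpl; eauto. Qed.

Definition zero_test_prog := pComp iszero_prog [pOracle].
Lemma eval_zero_test_prog p m xs : eval p zero_test_prog (m :: xs) (if p m =? 0 then 1 else 0).
Proof. econstructor; [repeat constructor|apply eval_iszero_prog]. Qed.

Definition zero_test_after_prog :=
  cond_prog (pComp sub_prog [pProj 0; pComp pSucc [pProj 2]]) zero_test_prog
    (pComp pSucc [pZero]).
Lemma eval_zero_test_after_prog p m n w :
  eval p zero_test_after_prog [m; n; w] (if w <? m then (if p m =? 0 then 1 else 0) else 1).
Proof.
  replace (if w <? m then _ else 1)
    with (match S w - m with 0 => if p m =? 0 then 1 else 0 | _ => 1 end).
  - apply eval_cond_prog; [|apply eval_zero_test_prog|repeat econstructor].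
    econstructor; [|apply eval_sub_prog]. repeat econstructor.
  - destruct (Nat.ltb_spec w m); [replace (S w - m) with 0 by lia; auto|].
    replace (S w - m) with (S (w - m)) by lia. auto.
Qed.

Definition nonzero_index_prog := pRec (pMin zero_test_prog) (pMin zero_test_after_prog).
Definition minus1_prog := pComp pred_prog [pComp pOracle [nonzero_index_prog]].

Lemma increasing_lt (k : nat -> nat) : (forall n, k n < k (S n)) -> forall i j, i < j -> k i < k j.
Proof.
  intros H i j Hij. induction j; [lia|].
  destruct (Nat.eq_dec i j) as [->|]; [apply H|]. specialize (H j). lia.
Qed.

Lemma comp_app_minus1_prog p q : minus1 p q -> comp_app minus1_prog p q.
Proof.
  intros (k & Hinc & Hk & Hall).
  assert (Hlt := increasing_lt k Hinc).
  assert (Hbefore : forall m n, m < k n -> p m <> 0 -> exists j, j < n /\ k j = m).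
  { intros m n Hm Hpm. destruct (Hall m Hpm) as [j <-]. exists j; split; auto.
    destruct (Nat.lt_ge_cases j n) as [|Hnj]; auto.
    destruct (Nat.eq_dec j n) as [->|]; [lia|]. specialize (Hlt n j ltac:(lia)). lia. }
  assert (Hidx : forall n, eval p nonzero_index_prog [n] (k n)).
  { induction n as [|n IHn].
    - apply eRec0. constructor.
      + pose proof (eval_zero_test_prog p (k 0) []) as E.
        rewrite (proj2 (Nat.eqb_neq _ _) (proj1 (Hk 0))) in E. exact E.
      + intros m Hm. exists 0.
        destruct (Nat.eq_dec (p m) 0) as [Hpm|Hpm];
          [|destruct (Hbefore m 0 Hm Hpm) as (j & Hj & _); lia].
        pose proof (eval_zero_test_prog p m []) as E.
        rewrite (proj2 (Nat.eqb_eq _ _) Hpm) in E. exact E.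
    - eapply eRecS; [exact IHn|]. constructor.
      + pose proof (eval_zero_test_after_prog p (k (S n)) n (k n)) as E.
        rewrite (proj2 (Nat.ltb_lt _ _) (Hinc n)),
          (proj2 (Nat.eqb_neq _ _) (proj1 (Hk (S n)))) in E. exact E.
      + intros m Hm. exists 0.
        pose proof (eval_zero_test_after_prog p m n (k n)) as E.
        destruct (Nat.ltb_spec (k n) m) as [Hnm|]; [|exact E].
        destruct (Nat.eq_dec (p m) 0) as [Hpm|Hpm].
        * rewrite (proj2 (Nat.eqb_eq _ _) Hpm) in E. exact E.
        * destruct (Hbefore m (S n) Hm Hpm) as (j & Hj & <-).
          destruct (Nat.eq_dec j n) as [->|]; [lia|]. specialize (Hlt j n ltac:(lia)). lia. }
  intros n. econstructor; [repeat econstructor; apply Hidx|].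
  destruct (Hk n) as [_ ->]. replace (p (k n) - 1) with (Nat.pred (p (k n))) by lia.
  apply eval_pred_prog.
Qed.

Lemma minus1_plus1 p : minus1 (plus1 p) p.
Proof.
  exists (fun n => n). repeat split; intros; unfold plus1 in *; eauto; lia.
Qed.

Lemma minus1_fun p q1 q2 : minus1 p q1 -> minus1 p q2 -> q1 = q2.
Proof. intros H1%comp_app_minus1_prog H2%comp_app_minus1_prog. eapply comp_app_fun; eauto. Qed.

Lemma minus1_zeros q : ~ minus1 (fun _ => 0) q.
Proof. intros (k & _ & Hk & _). apply (proj1 (Hk 0)); reflexivity. Qed.

Local Close Scope nat_scope.

Lemma ball_0_empty x : ~ ball 0 x.
Proof.
  unfold ball, qenum. simpl.
  replace (Q2R (0 # 1)) with 0 by (unfold Q2R; simpl; field).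
  pose proof (Rabs_pos (x - 0)). lra.
Qed.

Lemma closed_of_zeros : closed_of (fun _ => 0%nat) = fun x => 0 <= x <= 1.
Proof.
  extensionality x. apply propositional_extensionality. unfold closed_of.
  split; [tauto|]. split; auto using ball_0_empty.
Qed.

Lemma closed_of_pad N p : closed_of (pad N p) = closed_of p.
Proof.
  extensionality x. apply propositional_extensionality. unfold closed_of.
  split; intros [Hx Hball]; split; auto; intros n.
  - rewrite <- (pad_add N). apply Hball.
  - destruct (pad_cases N p n) as [[j ->]| ->]; auto using ball_0_empty.
Qed.

Lemma far_interval (c : R) : exists a b, 0 <= a /\ a < b /\ b <= 1 /\
  forall z, a <= z <= b -> / 2 ^ 3 < Rabs (c - z).
Proof.
  replace (/ 2 ^ 3) with (1/8) by (simpl; field).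
  destruct (Rle_dec (1/2) c).
  - exists 0, (1/8). repeat split; try lra. intros z Hz. rewrite Rabs_right; lra.
  - exists (7/8), 1. repeat split; try lra. intros z Hz. rewrite Rabs_left; lra.
Qed.

Definition pick (R : baire -> baire -> Prop) (r : baire) : option baire :=
  match excluded_middle_informative (exists s, R r s) with
  | left e => Some (proj1_sig (constructive_indefinite_description _ e))
  | right _ => None
  end.

Lemma pick_Some R r s : pick R r = Some s -> R r s.
Proof.
  unfold pick. destruct excluded_middle_informative as [e|]; [|discriminate].
  destruct constructive_indefinite_description as [s' Hs']; simpl. congruence.
Qed.

Lemma pick_exists R r s : R r s -> exists s', pick R r = Some s' /\ R r s'.
Proof.
  intros Hs. unfold pick. destruct excluded_middle_informative as [e|e]; [|exfalso; eauto].
  destruct constructive_indefinite_description as [s' Hs']; simpl. eauto.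
Qed.

Lemma pick_unique R r s : (forall s', R r s' -> s' = s) -> R r s -> pick R r = Some s.
Proof.
  intros Hu Hs. destruct (pick_exists R r s Hs) as (s' & E & Hs'). rewrite E, (Hu s' Hs').
  reflexivity.
Qed.

Lemma realizes_exists (U V : rep_space) (g : problem U V) :
  is_rep U -> is_rep V -> exists G, realizes G g.
Proof.
  intros [HU _] [_ HV].
  set (R := fun p q => forall u, delta U p u -> pdom g u -> exists y, delta V q y /\ g u y).
  exists (pick R). intros p u Hp [y Hy]. destruct (HV y) as [q Hq].
  destruct (pick_exists R p q) as (q' & E & Hq').
  - intros u' Hu' _. rewrite (HU _ _ _ Hu' Hp). eauto.
  - exists q'. split; auto. apply Hq'; [exact Hp|exists y; exact Hy].
Qed.

(* The output of H<id, G K> at r, as in [leW], for tA = K and tB = H. *)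
Definition through (tA tB : prf) (G : baire -> option baire) (r s : baire) : Prop :=
  exists q s', comp_app tA r q /\ G q = Some s' /\ comp_app tB (bpair r s') s.

Lemma through_fun tA tB G r s1 s2 : through tA tB G r s1 -> through tA tB G r s2 -> s1 = s2.
Proof.
  intros (q1 & t1 & A1 & G1 & B1) (q2 & t2 & A2 & G2 & B2).
  rewrite (comp_app_fun _ _ _ _ A1 A2), G2 in G1. injection G1 as ->.
  exact (comp_app_fun _ _ _ _ B1 B2).
Qed.

Definition reduces_via {X Y U V : rep_space} (tH tK : prf) (f : problem X Y) (g : problem U V) :=
  forall G, realizes G g -> forall p x, delta X p x -> pdom f x ->
    exists u, through tK tH G p u /\ exists y, delta Y u y /\ f x y.

Lemma leW_reduces_via {X Y U V : rep_space} (f : problem X Y) (g : problem U V) :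
  leW f g <-> exists tH tK, reduces_via tH tK f g.
Proof.
  split; intros (tH & tK & Hred); exists tH, tK; intros G HG p x Hp Hx.
  - destruct (Hred G HG p x Hp Hx) as (r & Hr & s & Hs & u & Hu & Hy).
    exists u. split; [exists r, s|]; auto.
  - destruct (Hred G HG p x Hp Hx) as (u & (r & s & Hr & Hs & Hu) & Hy). eauto 10.
Qed.

Lemma leW_trans {X Y U1 V1 U2 V2 : rep_space}
    (f : problem X Y) (g1 : problem U1 V1) (g2 : problem U2 V2) :
  leW f g1 -> leW g1 g2 -> leW f g2.
Proof.
  rewrite !leW_reduces_via. intros (tH1 & tK1 & Hred1) (tH2 & tK2 & Hred2).
  exists (psubst (bpair_prog bfst_prog
            (psubst (bpair_prog (psubst bfst_prog tK1) bsnd_prog) tH2)) tH1),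
    (psubst tK1 tK2).
  intros G HG p x Hp Hx.
  assert (HG1 : realizes (pick (through tK2 tH2 G)) g1).
  { intros r x1 Hr Hx1. destruct (Hred2 G HG r x1 Hr Hx1) as (u & Hu & Hy).
    exists u. split; [apply pick_unique; eauto using through_fun|exact Hy]. }
  destruct (Hred1 _ HG1 p x Hp Hx) as (u & (r & s1 & Hr & Hs1 & Hu) & Hy).
  destruct (pick_Some _ _ _ Hs1) as (q & s & Hq & Hs & Hs1').
  exists u. split; [|exact Hy].
  exists q, s. split; [eapply comp_app_psubst; eauto|split; [exact Hs|]].
  eapply comp_app_psubst; [|exact Hu].
  apply comp_app_bpair_prog; [apply comp_app_bfst_prog|].
  eapply comp_app_psubst; [|exact Hs1'].
  apply comp_app_bpair_prog; [|apply comp_app_bsnd_prog].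
  eapply comp_app_psubst; [apply comp_app_bfst_prog|exact Hr].
Qed.

Lemma through_id G r s : G r = Some s -> through id_prog bsnd_prog G r s.
Proof.
  intros Hs. exists r, s.
  split; [apply comp_app_id_prog|split; [exact Hs|apply comp_app_bsnd_prog]].
Qed.

Lemma leW_ptotal {U V : rep_space} (g : problem U V) : leW g (ptotal g).
Proof.
  apply leW_reduces_via. exists bsnd_prog, id_prog. intros G HG p u Hp [v Hv].
  destruct (HG p u Hp) as (s & Hs & y & Hy & Hgy); [exists v; intros _; exact Hv|].
  exists s. split; [apply through_id, Hs|].
  exists y. split; [exact Hy|apply Hgy; exists v; exact Hv].
Qed.

Lemma leW_pcompletion {U V : rep_space} (g : problem U V) : leW g (pcompletion g).
Proof.
  apply leW_reduces_via. exists (psubst bsnd_prog minus1_prog), plus1_prog.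
  intros G HG p u Hp Hu.
  destruct (HG (plus1 p) (Some u)) as (s & Hs & oy & Hoy & Hgy).
  - exists p. split; [apply minus1_plus1|exact Hp].
  - destruct Hu as [v Hv]. exists (Some v). intros _. eauto.
  - destruct (Hgy Hu) as (y & -> & Hy). destruct Hoy as (q & Hq & Hqy).
    exists q. split; [|eauto].
    exists (plus1 p), s. split; [apply comp_app_plus1_prog|split; [exact Hs|]].
    eapply comp_app_psubst; [apply comp_app_bsnd_prog|apply comp_app_minus1_prog, Hq].
Qed.

Lemma named_of_leW {X Y U V : rep_space} (f : problem X Y) (g : problem U V) p x :
  is_rep V -> delta X p x -> pdom f x -> leW f g -> exists q y, delta V q y.
Proof.
  intros [_ HV] Hp Hx (tH & tK & Hred). apply NNPP. intros Hnone.
  assert (HN : realizes (fun _ => None) g).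
  { intros r u _ [y _]. destruct (HV y) as [q Hq]. exfalso; eauto. }
  destruct (Hred _ HN p x Hp Hx) as (r & _ & s & E & _). discriminate.
Qed.

Definition interval_reducible (D : closed01_set -> Prop) : Prop :=
  forall a b : R, 0 <= a -> a < b -> b <= 1 ->
    (exists A : closed01_set, D A /\ forall x, proj1_sig A x <-> a <= x <= b) /\
    leW (C01_D D) (Cab_D a b D).

Lemma unit_interval_named D : interval_reducible D ->
  exists A, delta Closed01 (fun _ => 0%nat) A /\ pdom (C01_D D) A.
Proof.
  intros HD. destruct (HD 0 1 ltac:(lra) ltac:(lra) ltac:(lra)) as [(A & HA & HAx) _].
  exists A. split.
  - simpl. rewrite closed_of_zeros. extensionality x.
    apply propositional_extensionality, HAx.
  - exists (exist _ 0 (conj (Rle_refl 0) Rle_0_1)). split; [exact HA|apply HAx; simpl; lra].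
Qed.

Section Transfer.

Variables (D : closed01_set -> Prop) (HD : interval_reducible D).
Variables (U V U' V' : rep_space) (g : problem U V) (g' : problem U' V').
Variables (Genuine : baire -> Prop) (tA tB : prf).
Hypothesis realizer_g : exists G, realizes G g.
Hypothesis target_named : exists q y, delta V' q y.
Hypothesis genuine_named : forall r, Genuine r -> exists ou, delta U' r ou.
Hypothesis solved_off_genuine : forall r ou y, delta U' r ou -> ~ Genuine r -> g' ou y.
Hypothesis solved_on_genuine : forall G, realizes G g -> forall r ou, Genuine r -> delta U' r ou ->
  exists s, through tA tB G r s /\ exists y, delta V' s y /\ g' ou y.

Definition answer (G : baire -> option baire) (s0 r s : baire) : Prop :=
  (Genuine r /\ through tA tB G r s) \/ (~ Genuine r /\ s = s0).

Lemma answer_fun G s0 r s1 s2 : answer G s0 r s1 -> answer G s0 r s2 -> s1 = s2.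
Proof.
  intros [[Hg H1]|[Hg ->]] [[Hg' H2]|[Hg' ->]]; try contradiction; eauto using through_fun.
Qed.

Lemma answer_named G s0 y0 r s : realizes G g -> delta V' s0 y0 ->
  answer G s0 r s -> exists y, delta V' s y.
Proof.
  intros HG Hs0 [[Hg Hs]|[_ ->]]; [|eauto].
  destruct (genuine_named r Hg) as [ou Hr].
  destruct (solved_on_genuine G HG r ou Hg Hr) as (s' & Hs' & y & Hy & _).
  rewrite (through_fun _ _ _ _ _ _ Hs Hs'). eauto.
Qed.

Lemma realizes_answer G s0 y0 : realizes G g -> delta V' s0 y0 ->
  realizes (pick (answer G s0)) g'.
Proof.
  intros HG Hs0 r ou Hr _.
  assert (Hpick : forall s, answer G s0 r s -> pick (answer G s0) r = Some s)
    by (intros s Hs; apply pick_unique; eauto using answer_fun).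
  destruct (classic (Genuine r)) as [Hg|Hg].
  - destruct (solved_on_genuine G HG r ou Hg Hr) as (s & Hs & Hy).
    exists s. split; [apply Hpick; left; split|]; assumption.
  - exists s0. split; [apply Hpick; right; split; auto|].
    exists y0. split; [exact Hs0|exact (solved_off_genuine r ou y0 Hr Hg)].
Qed.

Lemma default_answer_stable tH tK : reduces_via tH tK (C01_D D) g' ->
  exists s0 y0 N c, delta V' s0 y0 /\
    forall p w, comp_app tH (bpair (pad N p) s0) w -> w 3%nat = c.
Proof.
  intros Hred.
  destruct (unit_interval_named D HD) as (A & HA & HAdom).
  destruct target_named as (q0 & y0 & Hq0).
  destruct realizer_g as [G0 HG0].
  destruct (Hred _ (realizes_answer G0 q0 y0 HG0 Hq0) _ _ HA HAdom)
    as (u0 & (r0 & s0 & _ & Hs0 & Hu0) & _).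
  destruct (answer_named G0 q0 y0 r0 s0 HG0 Hq0 (pick_Some _ _ _ Hs0)) as [z0 Hz0].
  destruct (eval_continuous _ tH [3%nat] (u0 3%nat) (Hu0 3%nat)) as [N HN].
  exists s0, z0, N, (u0 3%nat). split; [exact Hz0|].
  intros p w Hw. apply (eval_det (bpair (pad N p) s0) tH [3%nat]); [apply Hw|apply HN].
  intros i Hi. unfold bpair. destruct (Nat.even i); [|reflexivity].
  rewrite pad_lt; [reflexivity|]. pose proof (Nat.le_div2_diag_l i). lia.
Qed.

Lemma leW_Cab_D_far tH tK s0 y0 N c a b :
  reduces_via tH tK (C01_D D) g' -> delta V' s0 y0 ->
  (forall p w, comp_app tH (bpair (pad N p) s0) w -> w 3%nat = c) ->
  (forall z, a <= z <= b -> / 2 ^ 3 < Rabs (Q2R (qenum c) - z)) ->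
  leW (Cab_D a b D) g.
Proof.
  intros Hred Hs0 Hrun Hfar. apply leW_reduces_via.
  set (pad_fst := psubst bfst_prog (pad_prog N)).
  exists (psubst (bpair_prog pad_fst (psubst (bpair_prog (psubst pad_fst tK) bsnd_prog) tB)) tH),
    (psubst (psubst (pad_prog N) tK) tA).
  intros G HG p A Hp (xa & DA & Asub & Axa).
  assert (Hpad : delta Closed01 (pad N p) A) by (simpl in *; rewrite closed_of_pad; exact Hp).
  assert (HAdom : pdom (C01_D D) A).
  { assert (H01 : 0 <= proj1_sig xa <= 1).
    { simpl in Hp. change (proj1_sig A (proj1_sig xa)) in Axa. rewrite Hp in Axa.
      apply Axa. }
    exists (exist _ (proj1_sig xa) H01). split; assumption. }
  destruct (Hred _ (realizes_answer G s0 y0 HG Hs0) _ _ Hpad HAdom)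
    as (u & (r & s' & Hr & Hs' & Hu) & y & Hy & _ & HyA).
  destruct (pick_Some _ _ _ Hs') as [[_ (q & s & Hq & Hs & Hss')]|[_ ->]].
  - exists u. split.
    + exists q, s. split; [|split; [exact Hs|]].
      * eapply comp_app_psubst; [|exact Hq].
        eapply comp_app_psubst; [apply comp_app_pad_prog|exact Hr].
      * assert (Hpf : comp_app pad_fst (bpair p s) (pad N p))
          by (eapply comp_app_psubst; [apply comp_app_bfst_prog|apply comp_app_pad_prog]).
        eapply comp_app_psubst; [|exact Hu].
        apply comp_app_bpair_prog; [exact Hpf|].
        eapply comp_app_psubst; [|exact Hss'].
        apply comp_app_bpair_prog; [|apply comp_app_bsnd_prog].
        eapply comp_app_psubst; [exact Hpf|exact Hr].
    + exists (exist _ (proj1_sig y) (Asub _ HyA)).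
      split; [exact Hy|split; [exact DA|split; [exact Asub|exact HyA]]].
  - exfalso. specialize (Hy 3%nat). rewrite (Hrun p u Hu) in Hy.
    specialize (Hfar _ (Asub _ HyA)). lra.
Qed.

Lemma leW_transfer : leW (C01_D D) g' -> leW (C01_D D) g.
Proof.
  rewrite leW_reduces_via. intros (tH & tK & Hred).
  destruct (default_answer_stable tH tK Hred) as (s0 & y0 & N & c & Hs0 & Hrun).
  destruct (far_interval (Q2R (qenum c))) as (a & b & Ha & Hab & Hb & Hfar).
  apply leW_trans with (g1 := Cab_D a b D); [apply (HD a b Ha Hab Hb)|].
  exact (leW_Cab_D_far tH tK s0 y0 N c a b Hred Hs0 Hrun Hfar).
Qed.

End Transfer.

Lemma cototal_C01_D D : interval_reducible D -> cototal (C01_D D).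
Proof.
  intros HD U V HU HV g. split; [|intros Hred; exact (leW_trans _ _ _ Hred (leW_ptotal g))].
  intros Hred. destruct (unit_interval_named D HD) as (A & HA & HAdom).
  apply (leW_transfer D HD U V U V g (ptotal g) (fun r => exists u, delta U r u /\ pdom g u)
           id_prog bsnd_prog); [| |now intros r (u & Hu & _); eauto| | |exact Hred].
  - apply realizes_exists; assumption.
  - exact (named_of_leW _ _ _ _ HV HA HAdom Hred).
  - intros r u y Hr Hbad Hdom. exfalso. eauto.
  - intros G HG r u' (u & Hu & Hdom) Hr. rewrite (proj1 HU _ _ _ Hr Hu).
    destruct (HG r u Hu Hdom) as (s & Hs & y & Hy & Hgy).
    exists s. split; [apply through_id, Hs|].
    exists y. split; [exact Hy|intros _; exact Hgy].
Qed.

Lemma cocomplete_C01_D D : interval_reducible D -> cocomplete (C01_D D).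
Proof.
  intros HD U V HU HV g.
  split; [|intros Hred; exact (leW_trans _ _ _ Hred (leW_pcompletion g))].
  apply (leW_transfer D HD U V (completion U) (completion V) g (pcompletion g)
           (fun r => exists q u, minus1 r q /\ delta U q u /\ pdom g u)
           minus1_prog (psubst bsnd_prog plus1_prog)).
  - apply realizes_exists; assumption.
  - exists (fun _ => 0%nat), None. intros (q & x & Hq & _). exact (minus1_zeros q Hq).
  - intros r (q & u & Hq & Hu & _). exists (Some u), q. auto.
  - intros r [u|] y Hr Hbad; [|exact I]. intros Hdom. exfalso.
    destruct Hr as (q & Hq & Hu). apply Hbad. exists q, u. auto.
  - intros G HG r ou (q & u & Hq & Hu & Hdom) Hr.
    destruct ou as [u'|]; [|exfalso; apply Hr; eauto].
    destruct Hr as (q' & Hq' & Hu'). rewrite (minus1_fun _ _ _ Hq' Hq) in Hu'.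
    rewrite (proj1 HU _ _ _ Hu' Hu).
    destruct (HG q u Hu Hdom) as (s & Hs & y & Hy & Hgy).
    exists (plus1 s). split.
    + exists q, s. split; [apply comp_app_minus1_prog, Hq|split; [exact Hs|]].
      eapply comp_app_psubst; [apply comp_app_bsnd_prog|apply comp_app_plus1_prog].
    + exists (Some y). split; [exists s; split; [apply minus1_plus1|exact Hy]|].
      intros _. eauto.
Qed.

Theorem proposition6p7 (D : closed01_set -> Prop) :
  (forall a b : R, 0 <= a -> a < b -> b <= 1 ->
     (exists A : closed01_set, D A /\ forall x, proj1_sig A x <-> a <= x <= b) /\
     leW (C01_D D) (Cab_D a b D)) ->
  cocomplete (C01_D D) /\ cototal (C01_D D).
Proof.
  intros HD. split; [apply cocomplete_C01_D|apply cototal_C01_D]; exact HD.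
Qed.
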